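(* Let $P_1\subseteq P_2$ be meet semilattices with $0$ such that $P_1\subseteq P_2$ preserves finite covers, and let $re:T(P_2)\dashrightarrow T(P_1)$ be the partial map $\xi\mapsto\xi\cap P_1$ (defined when $\xi\cap P_1\ne\emptyset$). Then $U\mapsto re^{-1}(U)$ is an injective morphism of generalized Boolean algebras $\mathcal T_c(P_1)\hookrightarrow\mathcal T_c(P_2)$, and it satisfies $V^{P_1}_{(x:x_1,\dots,x_n)}\mapsto V^{P_2}_{(x:x_1,\dots,x_n)}$ for all $n\ge0$ and $x,x_1,\dots,x_n\in P_1$.
   Context: A meet semilattice with $0$ is a meet semilattice $P$ with least element $0$; $P_1\subseteq P_2$ means an injective meet- and $0$-preserving map, used to identify $P_1$ with a subset of $P_2$. A filter of $P$ is a subset $F$ with $\emptyset\ne F\ne P$, closed upwards and under $\wedge$. $F(P)$ carries the topology generated by $U_x=\{F:x\in F\}$; the sets $U_{(x:x_1,\dots,x_n)}=\{F:x\in F,\ x_1,\dots,x_n\notin F\}$ form a basis of compact open sets. The tight filters $T(P)$ are the closure in $F(P)$ of the ultrafilters (maximal filters), with the subspace topology; $V^P_{(x:x_1,\dots,x_n)}=U_{(x:x_1,\dots,x_n)}\cap T(P)$, $V^P_x=V^P_{(x:)}$. $T(P)$ is Hausdorff, and $\mathcal T_c(P)$ denotes the generalized Boolean algebra (union, intersection, set difference) of compact open subsets of $T(P)$; its elements are the finite unions of sets $V^P_{(x:x_1,\dots,x_n)}$. A finite cover of $x\in P$ is a finite set $\{x_1,\dots,x_n\}$ of elements $\le x$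 such that every $0\ne y\le x$ has $x_i\wedge y\ne0$ for some $i$. $P_1\subseteq P_2$ preserves finite covers if every finite cover in $P_1$ of an element $x\in P_1$ is a finite cover of $x$ in $P_2$. (Under this hypothesis, $\xi\cap P_1$ is a tight filter of $P_1$ whenever $\xi\in T(P_2)$ meets $P_1$.) *)

From HB Require Import structures.
From mathcomp Require Import all_boot all_order.
From mathcomp Require Import boolp classical_sets.
From Stdlib Require List.

Set Implicit Arguments.
Unset Strict Implicit.
Unset Printing Implicit Defensive.

Import Order.TTheory.
Local Open Scope classical_set_scope.

Section Filters.
Context {d : Order.disp_t} (P : bMeetSemilatticeType d).

Definition is_filter (F : set P) : Prop :=
  (exists x, F x) /\ (exists x, ~ F x) /\
  (forall x y : P, (x <= y)%O -> F x -> F y) /\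
  (forall x y : P, F x -> F y -> F (Order.meet x y)).

Definition is_ultrafilter (F : set P) : Prop :=
  is_filter F /\ forall G, is_filter G -> F `<=` G -> G = F.

Definition basicU (x : P) (xs : seq P) : set (set P) :=
  [set F | is_filter F /\ F x /\ forall y, y \in xs -> ~ F y].

Definition openF (O : set (set P)) : Prop :=
  O `<=` is_filter /\
  forall F, O F -> exists x xs, basicU x xs F /\ basicU x xs `<=` O.

(* Tight filters: closure in F(P) of the set of ultrafilters. *)
Definition is_tight (F : set P) : Prop :=
  is_filter F /\
  forall O, openF O -> O F -> exists G, is_ultrafilter G /\ O G.

Definition openT (O : set (set P)) : Prop :=
  exists O', openF O' /\ O = O' `&` is_tight.

Definition compactT (K : set (set P)) : Prop :=
  K `<=` is_tight /\
  forall (I : Type) (C : I -> set (set P)), (forall i, openT (C i)) ->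
    K `<=` (fun F => exists i, C i F) ->
    exists s : seq I, K `<=` (fun F => exists i, List.In i s /\ C i F).

Definition Tc (U : set (set P)) : Prop := openT U /\ compactT U.

Definition basicV (x : P) (xs : seq P) : set (set P) := basicU x xs `&` is_tight.

Definition is_finite_cover (x : P) (xs : seq P) : Prop :=
  (forall y, y \in xs -> (y <= x)%O) /\
  forall y : P, y != Order.bottom -> (y <= x)%O ->
    exists2 z, z \in xs & Order.meet z y != Order.bottom.

End Filters.

Section Restriction.
Context {d1 d2 : Order.disp_t} (P1 : bMeetSemilatticeType d1)
  (P2 : bMeetSemilatticeType d2) (iota : P1 -> P2).

(* iota identifies P1 with a sub-meet-semilattice-with-0 of P2. *)
Definition sub_embedding : Prop :=
  injective iota /\
  (forall x y, iota (Order.meet x y) = Order.meet (iota x) (iota y)) /\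
  iota Order.bottom = Order.bottom.

Definition preserves_finite_covers : Prop :=
  forall (x : P1) (xs : seq P1),
    is_finite_cover x xs -> is_finite_cover (iota x) (map iota xs).

Definition re (xi : set P2) : set P1 := iota @^-1` xi.

Definition re_inv (U : set (set P1)) : set (set P2) :=
  [set xi | is_tight xi /\ (exists x, re xi x) /\ U (re xi)].

End Restriction.

From HB Require Import structures.
From mathcomp Require Import all_boot all_order.
From mathcomp Require Import boolp classical_sets.
From Stdlib Require List.
Local Open Scope classical_set_scope.
Import Order.TTheory.

Set Implicit Arguments.
Unset Strict Implicit.
Unset Printing Implicit Defensive.

(* Basic sets [V_(x : xs)] are compact because the tight filters form a closed
   subset of the Cantor cube [2^P]: by Exel's characterization, a filter is tight
   iff it meets every finite cover of each of its elements.  Hence a compact open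
   set is a finite union of basic sets.  As [P1] preserves finite covers,
   [xi \cap P1] is tight whenever [xi] is, so [re^-1] maps [V^P1_(x : xs)] onto
   [V^P2_(x : xs)] and therefore [T_c(P1)] into [T_c(P2)]; being a preimage, it
   commutes with the Boolean operations.  It is injective because a nonempty
   [V^P1_(x : xs)] contains some [y != 0] below [x] and orthogonal to [xs], and
   any ultrafilter of [P2] through [y] lies in its preimage. *)

Lemma chain_bigcup_seq (A : eqType) (Fm : set (set A)) (t : seq A) :
  total_on Fm subset -> (forall l, l \in t -> (\bigcup_(X in Fm) X) l) ->
  t = [::] \/ exists2 X, Fm X & forall l, l \in t -> X l.
Proof.
move=> tot; elim: t => [|l t IH] tFm; first by left.
right; have [Y FmY Yl] := tFm l (mem_head _ _).
have [->|[X FmX Xt]] := IH (fun l' lt => tFm l' (mem_behead (s := l :: t) lt)).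
  by exists Y => // l'; rewrite mem_seq1 => /eqP->.
have [XY|YX] := tot _ _ FmX FmY.
  by exists Y => // l'; rewrite inE => /orP[/eqP->//|/Xt/XY].
by exists X => // l'; rewrite inE => /orP[/eqP->|/Xt]; [exact: YX|].
Qed.

Section LiteralCompactness.
Variables (T : eqType) (I : Type) (C : I -> set (set T)).
Implicit Types (t : seq (T * bool)) (F G : set T) (A B K : set (set T)).

(* [(a, true)] and [(a, false)] are the literals [a \in F] and [a \notin F]; a
   list of literals cuts out a basic clopen set of the Cantor cube [2^T]. *)
Fixpoint sat t F : Prop :=
  if t is (a, b) :: t' then (if b then F a else ~ F a) /\ sat t' F else True.

Lemma satP t F : sat t F <-> forall l, l \in t -> if l.2 then F l.1 else ~ F l.1.
Proof.
elim: t => [|[a b] t IH] /=; first by split => // _ l; rewrite in_nil.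
split=> [[Fab /IH Ft] l|Ft]; first by rewrite inE => /orP[/eqP->//|/Ft].
by split; [exact: Ft (mem_head _ _) | apply/IH => l lt; apply: Ft; rewrite inE lt orbT].
Qed.

Definition lits (a : T) (zs : seq T) := (a, true) :: [seq (z, false) | z <- zs].

Lemma sat_negs zs F : sat [seq (z, false) | z <- zs] F <-> forall z, z \in zs -> ~ F z.
Proof.
elim: zs => [|z zs IH] /=; first by split=> // _ z; rewrite in_nil.
split=> [[nFz /IH nFzs] y|nFzs]; first by rewrite inE => /orP[/eqP->|/nFzs].
by split=> [|]; [apply: nFzs (mem_head _ _) | apply/IH => y yzs; apply/nFzs/mem_behead/yzs].
Qed.

Lemma sat_lits a zs F : sat (lits a zs) F <-> F a /\ forall z, z \in zs -> ~ F z.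
Proof. by split=> -[Fa /sat_negs nFzs]. Qed.

Definition fin_covered A :=
  exists s : seq I, A `<=` (fun F => exists i, List.In i s /\ C i F).

Lemma fin_coveredS A B : A `<=` B -> fin_covered B -> fin_covered A.
Proof. by move=> AB [s Bs]; exists s => F /AB/Bs. Qed.

Lemma fin_coveredU A B : fin_covered A -> fin_covered B -> fin_covered (A `|` B).
Proof.
move=> [s1 As1] [s2 Bs2]; exists (s1 ++ s2) => F [/As1|/Bs2] [i [si Ci]].
  by exists i; split => //; apply: List.in_or_app; left.
by exists i; split => //; apply: List.in_or_app; right.
Qed.

Definition consistent K (S : set (T * bool)) :=
  forall t, (forall l, l \in t -> S l) -> ~ fin_covered (K `&` sat t).

Lemma consistent_bigcup_chain K : ~ fin_covered K ->
  forall Fm : set (set (T * bool)), Fm `<=` consistent K -> total_on Fm subset ->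
  consistent K (\bigcup_(X in Fm) X).
Proof.
move=> nK Fm cFm tot t /(chain_bigcup_seq tot) [->|[X FmX Xt]].
  by move=> Kc; apply: nK; apply: fin_coveredS Kc.
exact: (cFm X FmX t Xt).
Qed.

Lemma consistent_maximal_total K S : consistent K S ->
  (forall S', S `<` S' -> ~ consistent K S') ->
  forall a, S (a, true) \/ S (a, false).
Proof.
move=> cS maxS a; apply: contrapT => /not_orP[nSt nSf].
have extend b : ~ S (a, b) -> exists t, (forall l, l \in t -> S l \/ l = (a, b))
    /\ fin_covered (K `&` sat t).
  move=> nSb; apply: contrapT => nt; apply: (maxS (S `|` [set (a, b)])).
    by split=> [l|/(_ (a, b) (or_intror erefl))//]; left.
  by move=> t tS ct; apply: nt; exists t.
have [t1 [t1S ct1]] := extend _ nSt; have [t2 [t2S ct2]] := extend _ nSf.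
pose t := [seq l <- t1 | l != (a, true)] ++ [seq l <- t2 | l != (a, false)].
have tS l : l \in t -> S l.
  rewrite mem_cat !mem_filter => /orP[/andP[/eqP nl /t1S]|/andP[/eqP nl /t2S]];
  by case.
apply: (cS t tS); apply: fin_coveredS (fin_coveredU ct1 ct2).
move=> F [KF /satP Ft]; have [Fa|nFa] := pselect (F a); [left|right];
  split=> //; apply/satP => l lt.
- case: (eqVneq l (a, true)) => [->|nl] //.
  by apply: Ft; rewrite mem_cat mem_filter nl lt.
- case: (eqVneq l (a, false)) => [->|nl] //.
  by apply: Ft; rewrite mem_cat !mem_filter nl lt orbT.
Qed.

(* The hypotheses say that [K] is closed in the Cantor cube [2^T] and that the
   [C i] are relatively open in [K].  A maximal consistent set of literals decides
   every [a]; its positive part is a point of [K] that no [C i] can contain. *)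
Theorem closed_cube_compact K :
  (forall F, (forall t, sat t F -> exists2 G, K G & sat t G) -> K F) ->
  (forall i F, K F -> C i F -> exists t, sat t F /\ K `&` sat t `<=` C i) ->
  K `<=` (fun F => exists i, C i F) -> fin_covered K.
Proof.
move=> Kclosed Copen Kcov; apply: contrapT => nK.
have [S [cS maxS]] := Zorn_bigcup (consistent_bigcup_chain nK).
have tot := consistent_maximal_total cS maxS.
pose F0 a := S (a, true).
have satS t : sat t F0 -> forall l, l \in t -> S l.
  by move=> /satP Ft [a [|]] /Ft //=; case: (tot a).
have KF0 : K F0.
  apply: Kclosed => t /satS tS; apply: contrapT => nG; apply: (cS t tS).
  by exists [::] => F [KF tF]; case: nG; exists F.
have [i Ci] := Kcov F0 KF0; have [t [tF0 tC]] := Copen i F0 KF0 Ci.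
by apply: (cS t (satS t tF0)); exists [:: i] => F /tC CiF; exists i; split => //; left.
Qed.

End LiteralCompactness.

Section TightFilters.
Variables (d : Order.disp_t) (P : bMeetSemilatticeType d).
Implicit Types (F G H : set P) (x y z : P) (xs Z : seq P).

Lemma filter_bot F : is_filter F -> ~ F \bot%O.
Proof. by move=> [_ [[w nFw] [Fup _]]] F0; apply/nFw/(Fup _ _ (le0x w)). Qed.

Lemma filter_up F x y : is_filter F -> (x <= y)%O -> F x -> F y.
Proof. by move=> [_ [_ [Fup _]]]; apply: Fup. Qed.

Lemma filter_meet F x y : is_filter F -> F x -> F y -> F (Order.meet x y).
Proof. by move=> [_ [_ [_ FI]]]; apply: FI. Qed.

Lemma filter_meetE F x y : is_filter F -> F (Order.meet x y) <-> F x /\ F y.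
Proof.
move=> fF; split=> [Fxy|[]]; last exact: filter_meet.
by split; apply: filter_up Fxy => //; [exact: leIl | exact: leIr].
Qed.

(* Zorn's lemma on the sets [G] making [up y `|` G] a filter: adjoining the
   principal filter of [y] keeps the union of the empty chain a filter. *)
Lemma exists_ultrafilter y : y != \bot%O -> exists G, is_ultrafilter G /\ G y.
Proof.
move=> y0; pose up := [set z | (y <= z)%O]; have up_y : up y := lexx y.
pose good G := is_filter (up `|` G).
have chain Fm : Fm `<=` good -> total_on Fm subset -> good (\bigcup_(X in Fm) X).
  move=> gFm tot.
  have lift X z : Fm X -> (up `|` X) z -> (up `|` \bigcup_(X in Fm) X) z.
    by move=> FmX [h|h]; [left | right; exists X].
  split; first by exists y; left.
  split.
    exists \bot%O => -[y_0|[X FmX X0]]; first by move: y_0; rewrite /up /= lex0 (negPf y0).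
    by apply: (filter_bot (gFm _ FmX)); right.
  split=> [a b ab [ya|[X FmX Xa]]|a b [ya|[X FmX Xa]] [yb|[Y FmY Yb]]].
  - by left; exact: le_trans ab.
  - by apply: (lift X) => //; apply: (filter_up (gFm _ FmX) ab); right.
  - by left; rewrite /up /= lexI ya yb.
  - by apply: (lift Y) => //; apply: (filter_meet (gFm _ FmY)); [left|right].
  - by apply: (lift X) => //; apply: (filter_meet (gFm _ FmX)); [right|left].
  - have [XY|YX] := tot _ _ FmX FmY.
      by apply: (lift Y) => //; apply: (filter_meet (gFm _ FmY)); right => //; exact: XY.
    by apply: (lift X) => //; apply: (filter_meet (gFm _ FmX)); right => //; exact: YX.
have [A [gA maxA]] := Zorn_bigcup chain.
exists (up `|` A); split; last by left.
split=> // H fH AH; have upH : up `|` H = H by apply/setUidPr => z yz; apply: AH; left.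
apply/seteqP; split=> // z Hz; apply: contrapT => nAz.
apply: (maxA H); last by rewrite /good upH.
by split=> [w Aw|HA]; [apply: AH; right | apply: nAz; right; exact: HA].
Qed.

Lemma ultrafilter_sep G z : is_ultrafilter G -> ~ G z ->
  exists2 g, G g & Order.meet g z = \bot%O.
Proof.
move=> [fG maxG] nGz; apply: contrapT => nsep.
have gz0 g : G g -> Order.meet g z != \bot%O.
  by move=> Gg; apply/eqP => gz; apply: nsep; exists g.
pose H := [set w | exists2 g, G g & (Order.meet g z <= w)%O].
have fH : is_filter H.
  have [g Gg] := fG.1.
  split; first by exists z => //; exists g => //; exact: leIr.
  split; first by exists \bot%O => -[g' Gg']; rewrite lex0 (negPf (gz0 g' Gg')).
  split=> [a b ab [g' Gg' le]|a b [g1 Gg1 le1] [g2 Gg2 le2]].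
    by exists g'; last exact: le_trans ab.
  exists (Order.meet g1 g2); first exact: filter_meet.
  rewrite lexI; apply/andP; split.
    by apply: le_trans le1; rewrite leI2 // leIl.
  by apply: le_trans le2; rewrite leI2 // leIr.
have GH : G `<=` H by move=> g Gg; exists g => //; exact: leIl.
by apply: nGz; rewrite -(maxG H fH GH); have [g Gg] := fG.1; exists g => //; exact: leIr.
Qed.

Lemma ultrafilter_avoid G x Z : is_ultrafilter G -> G x ->
  (forall z, z \in Z -> ~ G z) ->
  exists g, [/\ G g, (g <= x)%O & forall z, z \in Z -> Order.meet g z = \bot%O].
Proof.
move=> uG Gx; elim: Z => [|a Z IH] nGZ.
  by exists x; split => // z; rewrite in_nil.
have [g [Gg gx gZ]] := IH (fun z zZ => nGZ z (mem_behead (s := a :: Z) zZ)).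
have [h Gh ha] := ultrafilter_sep uG (nGZ a (mem_head _ _)).
exists (Order.meet g h); split; first exact: filter_meet uG.1 Gg Gh.
  exact: le_trans (leIl _ _) gx.
move=> z; rewrite inE => /orP[/eqP->|zZ]; apply/eqP; rewrite -lex0.
  by rewrite -ha leI2 // leIr.
by rewrite -(gZ z zZ) leI2 // leIl.
Qed.

(* Exel's characterization of tight filters. *)
Definition meets_covers F :=
  forall x Z, F x -> is_finite_cover x Z -> exists2 z, z \in Z & F z.

Lemma ultrafilter_meets_covers G : is_ultrafilter G -> meets_covers G.
Proof.
move=> uG x Z Gx [_ Zcov]; apply: contrapT => nGZ.
have [g [Gg gx gZ]] := ultrafilter_avoid uG Gx (fun z zZ Gz => nGZ (ex_intro2 _ _ z zZ Gz)).
have g0 : g != \bot%O by apply: contraPneq (filter_bot uG.1) => <-.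
by have [z zZ] := Zcov g g0 gx; rewrite meetC gZ // eqxx.
Qed.

Lemma ultrafilter_tight G : is_ultrafilter G -> is_tight G.
Proof. by move=> uG; split; [exact: uG.1 | move=> O _ OG; exists G]. Qed.

Lemma openF_basicU x xs : openF (basicU x xs).
Proof. by split=> [F []|F UF] //; exists x, xs; split. Qed.

Lemma tight_meets_covers F : is_tight F -> meets_covers F.
Proof.
move=> [fF tF] x Z Fx cZ; apply: contrapT => nFZ.
have [G [uG [_ [Gx nGZ]]]] : exists G, is_ultrafilter G /\ basicU x Z G.
  by apply: tF; [exact: openF_basicU | split=> //; split=> // z zZ Fz; apply: nFZ; exists z].
by have [z zZ Gz] := ultrafilter_meets_covers uG Gx cZ; exact: nGZ zZ Gz.
Qed.

(* A point of [F] below [x] and disjoint from [xs]: meet [x] with [xs] and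
   observe that these meets cannot cover [x], since [F] would meet them. *)
Lemma meets_covers_witness F x xs : is_filter F -> meets_covers F -> F x ->
  (forall a, a \in xs -> ~ F a) ->
  exists y, [/\ y != \bot%O, (y <= x)%O & forall a, a \in xs -> Order.meet y a = \bot%O].
Proof.
move=> fF cF Fx nFxs; apply: contrapT => nwit.
have [|_ /mapP[a axs ->] Fxa] := cF x (map (Order.meet x) xs) Fx.
  split=> [_ /mapP[a _ ->]|y y0 yx]; first exact: leIl.
  apply: contrapT => ny; apply: nwit; exists y; split => // a axs.
  apply/eqP; apply: contrapT => ya; apply: ny; exists (Order.meet x a); first exact: map_f.
  by rewrite meetC meetA (meet_l yx); apply/negP.
by apply: (nFxs a axs); apply: filter_up Fxa => //; exact: leIr.
Qed.

Lemma basicU_ultrafilter x xs y : y != \bot%O -> (y <= x)%O ->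
  (forall a, a \in xs -> Order.meet y a = \bot%O) ->
  exists G, is_ultrafilter G /\ basicU x xs G.
Proof.
move=> y0 yx yxs; have [G [uG Gy]] := exists_ultrafilter y0.
exists G; split=> //; split; first exact: uG.1.
split; first exact: filter_up uG.1 yx Gy.
move=> a axs Ga; apply: (filter_bot uG.1).
by rewrite -(yxs a axs); exact: filter_meet uG.1 Gy Ga.
Qed.

Lemma meets_covers_tight F : is_filter F -> meets_covers F -> is_tight F.
Proof.
move=> fF cF; split=> // O [_ Oopen] OF.
have [x [xs [[_ [Fx nFxs]] xsO]]] := Oopen F OF.
have [y [y0 yx yxs]] := meets_covers_witness fF cF Fx nFxs.
by have [G [uG /xsO OG]] := basicU_ultrafilter y0 yx yxs; exists G.
Qed.

End TightFilters.

Section CompactOpenSets.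
Variables (d : Order.disp_t) (P : bMeetSemilatticeType d).
Implicit Types (F G e : set P) (x y : P) (xs : seq P) (A B U : set (set P)).

Lemma openT_nbhd U F : openT U -> U F ->
  exists x xs, basicV x xs F /\ basicV x xs `<=` U.
Proof.
move=> [O [[_ Oopen] ->]] [OF tF]; have [x [xs [UF UO]]] := Oopen F OF.
by exists x, xs; split=> [|G [/UO OG tG]]; split.
Qed.

Lemma basicVP x xs F :
  basicV x xs F <-> [/\ is_tight F, F x & forall y, y \in xs -> ~ F y].
Proof.
split=> [[[_ [Fx nFxs]] tF]|[tF Fx nFxs]]; first by split.
by split=> //; split; [exact: tF.1 | split].
Qed.

Lemma basicV_meet x xs y ys :
  basicV (Order.meet x y) (xs ++ ys) = basicV x xs `&` basicV y ys.
Proof.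
apply/seteqP; split=> F.
  move=> /basicVP[tF /(filter_meetE _ _ tF.1)[Fx Fy] nFxys].
  by split; apply/basicVP; split=> // z zs; apply: nFxys; rewrite mem_cat zs ?orbT.
move=> [/basicVP[tF Fx nFxs] /basicVP[_ Fy nFys]]; apply/basicVP; split=> //.
  exact: filter_meet tF.1 Fx Fy.
by move=> z; rewrite mem_cat => /orP[/nFxs|/nFys].
Qed.

(* Each condition defining [basicV x xs] is violated on a basic clopen set of
   the Cantor cube; for tightness this is where [meets_covers] is needed. *)
Lemma basicV_closed x xs F :
  (forall t, sat t F -> exists2 G, basicV x xs G & sat t G) -> basicV x xs F.
Proof.
move=> adh.
have Fx : F x.
  apply: contrapT => nFx.
  by have [G /basicVP[_ Gx _] [nGx _]] := adh [:: (x, false)] (conj nFx I).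
have nFxs y : y \in xs -> ~ F y.
  move=> yxs Fy; have [G /basicVP[_ _ nGxs] [Gy _]] := adh [:: (y, true)] (conj Fy I).
  exact: nGxs Gy.
have nF0 : ~ F \bot%O.
  move=> F0; have [G /basicVP[tG _ _] [G0 _]] := adh [:: (\bot%O, true)] (conj F0 I).
  exact: filter_bot tG.1 G0.
have Fup a b : (a <= b)%O -> F a -> F b.
  move=> ab Fa; apply: contrapT => nFb.
  have [G /basicVP[tG _ _] [Ga [nGb _]]] :=
    adh [:: (a, true); (b, false)] (conj Fa (conj nFb I)).
  exact/nGb/(filter_up tG.1 ab).
have FI a b : F a -> F b -> F (Order.meet a b).
  move=> Fa Fb; apply: contrapT => nFab.
  have [G /basicVP[tG _ _] [Ga [Gb [nGab _]]]] :=
    adh [:: (a, true); (b, true); (Order.meet a b, false)] (conj Fa (conj Fb (conj nFab I))).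
  exact/nGab/(filter_meet tG.1).
have fF : is_filter F by split; [exists x | split; [exists \bot%O | split]].
have cF : meets_covers F.
  move=> a Z Fa cZ; apply: contrapT => nFZ.
  have /adh[G /basicVP[tG _ _] /sat_lits[Ga nGZ]] : sat (lits a Z) F.
    by apply/sat_lits; split=> // z zZ Fz; apply: nFZ; exists z.
  by have [z zZ Gz] := tight_meets_covers tG Ga cZ; exact: nGZ zZ Gz.
by split; [split | exact: meets_covers_tight].
Qed.

Lemma basicV_compact x xs : compactT (basicV x xs).
Proof.
split=> [F [] //|J C Copen Kcov].
apply: (closed_cube_compact (basicV_closed (xs := xs)) _ Kcov) => j F KF CF.
have [a [as_ [/basicVP[_ Fa nFas] aC]]] := openT_nbhd (Copen j) CF.
exists (lits a as_); split; first exact/sat_lits.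
by move=> G [/basicVP[tG _ _] /sat_lits[Ga nGas]]; apply/aC/basicVP.
Qed.

Lemma openT_setU A B : openT A -> openT B -> openT (A `|` B).
Proof.
move=> [OA [[OAf OAo] ->]] [OB [[OBf OBo] ->]].
exists (OA `|` OB); split; last by rewrite setIUl.
split=> [F [/OAf|/OBf] //|F [/OAo|/OBo] [x [xs [UF UO]]]].
  by exists x, xs; split=> // G /UO; left.
by exists x, xs; split=> // G /UO; right.
Qed.

Lemma compactT_setU A B : compactT A -> compactT B -> compactT (A `|` B).
Proof.
move=> [At Ac] [Bt Bc]; split=> [F [/At|/Bt] //|J C Copen ABcov].
exact: fin_coveredU (Ac J C Copen (fun F AF => ABcov F (or_introl AF)))
                    (Bc J C Copen (fun F BF => ABcov F (or_intror BF))).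
Qed.

Lemma Tc_setU A B : Tc A -> Tc B -> Tc (A `|` B).
Proof. by move=> [oA cA] [oB cB]; split; [exact: openT_setU | exact: compactT_setU]. Qed.

Lemma Tc_set0 : Tc (@set0 (set P)).
Proof.
split; first by exists set0; split; [split=> // F [] | rewrite set0I].
by split=> // J C _ _; exists [::].
Qed.

Lemma Tc_basicV x xs : Tc (basicV x xs).
Proof.
split; last exact: basicV_compact.
by exists (basicU x xs); split; first exact: openF_basicU.
Qed.

Fixpoint unionV (s : seq (P * seq P)) : set (set P) :=
  if s is (x, xs) :: s' then basicV x xs `|` unionV s' else set0.

Lemma unionV_In s F : unionV s F <-> exists i, List.In i s /\ basicV i.1 i.2 F.
Proof.
elim: s => [|[x xs] s IH] /=; first by split=> [[]|[i [[]]]].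
split=> [[Fi|/IH[i [si Fi]]]|[i [[<-|si] Fi]]].
- by exists (x, xs); split; [left|].
- by exists i; split; [right|].
- by left.
- by right; apply/IH; exists i.
Qed.

Lemma Tc_unionV s : Tc (unionV s).
Proof. by elim: s => [|[x xs] s IH]; [exact: Tc_set0 | exact: Tc_setU (Tc_basicV x xs) IH]. Qed.

Lemma Tc_unionV_of U : Tc U -> exists s, U = unionV s.
Proof.
move=> [Uo [_ Uc]].
pose J := {i : P * seq P | basicV i.1 i.2 `<=` U}.
have Ucov : U `<=` (fun F => exists j : J, basicV (sval j).1 (sval j).2 F).
  by move=> F /(openT_nbhd Uo)[x [xs [Fx xU]]]; exists (exist _ (x, xs) xU).
have [s {}Ucov] := Uc J _ (fun j => (Tc_basicV _ _).1) Ucov.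
exists (map sval s); apply/seteqP; split=> F.
  by move=> /Ucov[j [sj Fj]]; apply/unionV_In; exists (sval j); split=> //; exact: List.in_map.
by move=> /unionV_In[i [/List.in_map_iff[j [<- _]] Fi]]; exact: (svalP j).
Qed.

Lemma tight_nbhd_avoid_basicV e b bs : is_tight e -> ~ basicV b bs e ->
  exists c cs, basicV c cs e /\ forall F, basicV c cs F -> ~ basicV b bs F.
Proof.
move=> te neb; have [eb|nb] := pselect (e b).
  have [b' bsb' eb'] : exists2 b', b' \in bs & e b'.
    by apply: contrapT => nbs; apply/neb/basicVP; split=> // y bsy ey; apply: nbs; exists y.
  exists b', [::]; split; first by apply/basicVP.
  by move=> F /basicVP[_ Fb' _] /basicVP[_ _ nFbs]; exact: nFbs bsb' Fb'.
have [c ec] := te.1.1; exists c, [:: b]; split.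
  by apply/basicVP; split=> // y; rewrite mem_seq1 => /eqP->.
by move=> F /basicVP[_ _ nFb] /basicVP[_ Fb _]; exact: nFb b (mem_head _ _) Fb.
Qed.

Lemma tight_nbhd_avoid_unionV e s : is_tight e -> ~ unionV s e ->
  exists c cs, basicV c cs e /\ forall F, basicV c cs F -> ~ unionV s F.
Proof.
move=> te; elim: s => [|[b bs] s IH] /=.
  by have [c ec] := te.1.1; exists c, [::]; split=> //; apply/basicVP.
move=> /not_orP[nb ns]; have [c [cs [ec cs_s]]] := IH ns.
have [c' [cs' [ec' cs_b]]] := tight_nbhd_avoid_basicV te nb.
exists (Order.meet c c'), (cs ++ cs'); rewrite basicV_meet; split=> // F [Fc Fc'].
by move=> [/(cs_b _ Fc')|/(cs_s _ Fc)].
Qed.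

End CompactOpenSets.

Section Restriction.
Variables (d1 d2 : Order.disp_t) (P1 : bMeetSemilatticeType d1)
  (P2 : bMeetSemilatticeType d2) (iota : P1 -> P2).
Implicit Types (U W : set (set P1)) (x y : P1) (xs : seq P1).

Lemma re_inv0 : re_inv iota set0 = set0.
Proof. by apply/seteqP; split=> xi // [_ [_ []]]. Qed.

Lemma re_invS U W : U `<=` W -> re_inv iota U `<=` re_inv iota W.
Proof. by move=> UW xi [txi [ne /UW]]. Qed.

Lemma re_invU U W : re_inv iota (U `|` W) = re_inv iota U `|` re_inv iota W.
Proof.
apply/seteqP; split=> xi; first by move=> [txi [ne [Ure|Wre]]]; [left|right].
by move=> [[txi [ne Ure]]|[txi [ne Wre]]]; (split; last split)=> //; [left|right].
Qed.

Lemma re_invI U W : re_inv iota (U `&` W) = re_inv iota U `&` re_inv iota W.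
Proof.
apply/seteqP; split=> xi; first by move=> [txi [ne [Ure Wre]]].
by move=> [[txi [ne Ure]] [_ [_ Wre]]].
Qed.

Lemma re_invD U W : re_inv iota (U `\` W) = re_inv iota U `\` re_inv iota W.
Proof.
apply/seteqP; split=> xi; first by move=> [txi [ne [Ure nWre]]]; split=> // -[_ []].
by move=> [[txi [ne Ure]] nW]; (split; last split)=> //; split=> // Wre; apply: nW.
Qed.

Hypotheses (iota_emb : sub_embedding iota) (iota_covers : preserves_finite_covers iota).

Lemma iota_le x y : (x <= y)%O -> (iota x <= iota y)%O.
Proof. by move=> /meet_l xy; apply/meet_idPl; rewrite -iota_emb.2.1 xy. Qed.

Lemma iota_neq0 y : y != \bot%O -> iota y != \bot%O.
Proof. by apply: contra_neq => y0; apply: iota_emb.1; rewrite y0 iota_emb.2.2. Qed.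

Lemma re_filter xi : is_filter xi -> (exists x, re iota xi x) -> is_filter (re iota xi).
Proof.
move=> fxi ne; split=> //; split.
  by exists \bot%O; rewrite /re /= iota_emb.2.2; exact: filter_bot fxi.
split=> [x y /iota_le|x y]; first exact: filter_up fxi.
by rewrite /re /= iota_emb.2.1; exact: filter_meet.
Qed.

Lemma re_tight xi : is_tight xi -> (exists x, re iota xi x) -> is_tight (re iota xi).
Proof.
move=> txi ne; apply: meets_covers_tight; first exact: re_filter txi.1 ne.
move=> x Z xix /iota_covers cZ.
by have [_ /mapP[z Zz ->] xiz] := tight_meets_covers txi xix cZ; exists z.
Qed.

Lemma re_inv_basicV x xs : re_inv iota (basicV x xs) = basicV (iota x) (map iota xs).
Proof.
apply/seteqP; split=> xi.
  move=> [txi [_ /basicVP[_ xix nxixs]]]; apply/basicVP; split=> //.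
  by move=> _ /mapP[a axs ->]; exact: nxixs.
move=> /basicVP[txi xix nxixs]; have ne : exists x, re iota xi x by exists x.
split=> //; split=> //; apply/basicVP; split=> //.
  exact: re_tight.
by move=> y yxs; apply/nxixs/map_f.
Qed.

Lemma re_inv_basicV_inhabited x xs e :
  basicV x xs e -> exists xi, re_inv iota (basicV x xs) xi.
Proof.
move=> /basicVP[te ex nexs]; rewrite re_inv_basicV.
have [y [y0 yx yxs]] := meets_covers_witness te.1 (tight_meets_covers te) ex nexs.
have [|G [uG [_ [Gx nGxs]]]] :=
  basicU_ultrafilter (iota_neq0 y0) (iota_le yx) (xs := map iota xs).
  by move=> _ /mapP[a axs ->]; rewrite -iota_emb.2.1 yxs // iota_emb.2.2.
by exists G; apply/basicVP; split=> //; exact: ultrafilter_tight.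
Qed.

Lemma re_inv_unionV s :
  re_inv iota (unionV s) = unionV [seq (iota i.1, map iota i.2) | i <- s].
Proof.
elim: s => [|[x xs] s IH] /=; first exact: re_inv0.
by rewrite re_invU re_inv_basicV IH.
Qed.

Lemma Tc_re_inv U : Tc U -> Tc (re_inv iota U).
Proof. by move=> /Tc_unionV_of[s ->]; rewrite re_inv_unionV; exact: Tc_unionV. Qed.

(* A point [e] of [U \ W] has a basic neighbourhood inside [U] and off [W];
   its nonempty preimage lies in [re_inv U] but not in [re_inv W]. *)
Lemma re_inv_subset U W : Tc U -> Tc W ->
  re_inv iota U `<=` re_inv iota W -> U `<=` W.
Proof.
move=> [Uo [Ut _]] /Tc_unionV_of[s ->] UW e Ue; apply: contrapT => nWe.
have [c [cs [ec cW]]] := tight_nbhd_avoid_unionV (Ut e Ue) nWe.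
have [a [as_ [ea aU]]] := openT_nbhd Uo Ue.
have eB : basicV (Order.meet a c) (as_ ++ cs) e by rewrite basicV_meet.
have [xi] := re_inv_basicV_inhabited eB; rewrite basicV_meet re_invI.
by move=> [/(re_invS aU)/UW[_ [_ Wxi]] [_ [_ /cW]]].
Qed.

End Restriction.

Theorem mainTheorem7 {d1 d2 : Order.disp_t} (P1 : bMeetSemilatticeType d1)
    (P2 : bMeetSemilatticeType d2) (iota : P1 -> P2) :
  sub_embedding iota -> preserves_finite_covers iota ->
  (forall U, Tc U -> Tc (re_inv iota U)) /\
  re_inv iota set0 = set0 /\
  (forall U W, Tc U -> Tc W ->
     re_inv iota (U `|` W) = re_inv iota U `|` re_inv iota W) /\
  (forall U W, Tc U -> Tc W ->
     re_inv iota (U `&` W) = re_inv iota U `&` re_inv iota W) /\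
  (forall U W, Tc U -> Tc W ->
     re_inv iota (U `\` W) = re_inv iota U `\` re_inv iota W) /\
  (forall U W, Tc U -> Tc W -> re_inv iota U = re_inv iota W -> U = W) /\
  (forall (x : P1) (xs : seq P1),
     re_inv iota (basicV x xs) = basicV (iota x) (map iota xs)).
Proof.
move=> emb covers; split; first exact: Tc_re_inv emb covers.
split; first exact: re_inv0.
split; first by move=> U W _ _; exact: re_invU.
split; first by move=> U W _ _; exact: re_invI.
split; first by move=> U W _ _; exact: re_invD.
split; last exact: re_inv_basicV emb covers.
move=> U W TU TW UW; apply/seteqP.
by split; apply: (re_inv_subset emb covers) => //; [rewrite UW | rewrite -UW].
Qed.
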